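(* Let $\mathcal{G}=(\mathcal{V},\mathcal{A})$ be a finite directed graph with vertex weights $\{q_i\}_{i\in\mathcal{V}}$. Apply the following pruning procedure: for each leaf SCC of $\mathcal{G}$, with vertex set $\mathcal{V}_S$, select a vertex $i\in\arg\min_{a\in\mathcal{V}_S} q_a$ (arbitrarily among minimizers) and remove all outgoing arcs of $i$. Let $\mathcal{G}^{\mathrm{p}}=(\mathcal{V}^{\mathrm{p}},\mathcal{A}^{\mathrm{p}})$ be the resulting graph. Then $\mathcal{V}^{\mathrm{p}}=\mathcal{V}$, $\mathcal{A}^{\mathrm{p}}\subseteq\mathcal{A}$, and \[ \sum_{i:\ i \text{ is a predecessor of some vertex in } \mathcal{L}(\mathcal{G}^{\mathrm{p}})} q_i = \sum_{k\in\mathcal{V}} q_k - \sum_{i\in\mathcal{L}(\mathcal{G})} q_i - \sum_{\mathcal{V}_S\in\mathbb{V}} \min_{a\in\mathcal{V}_S} q_a, \] where $\mathbb{V}$ is the set of vertex sets of all leaf SCCs of $\mathcal{G}$.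
   Context: A leaf vertex is a vertex with no outgoing arcs; $\mathcal{L}(\mathcal{H})$ denotes the set of leaf vertices of a directed graph $\mathcal{H}$. A vertex $j$ is a predecessor of vertex $i$ iff there is a directed path from $j$ to $i$. A strongly connected component (SCC) is a maximal subgraph in which every ordered pair of vertices is joined by a directed path inside the subgraph. A leaf SCC is an SCC with at least two vertices from which no arc goes to a vertex outside the SCC. *)

From mathcomp Require Import all_boot all_order all_algebra.
Set Implicit Arguments. Unset Strict Implicit. Unset Printing Implicit Defensive.
Import Order.TTheory GRing.Theory Num.Theory.
Local Open Scope ring_scope.

(* A finite directed graph: vertex set = finType T, arc set = relation A
   (A i j  <=>  arc i -> j). *)
Section Graph.
Variable T : finType.
Variable A : rel T.

Definition leaf (i : T) : bool := [forall j, ~~ A i j].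

Definition predecessor (j i : T) : bool := [exists k, A j k && connect A k i].

Definition induced (S : {set T}) : rel T := [rel a b | [&& A a b, a \in S & b \in S]].

Definition strongly_connected (S : {set T}) : bool :=
  [forall x in S, forall y in S, connect (induced S) x y].

Definition scc (S : {set T}) : bool :=
  [&& S != set0, strongly_connected S &
      [forall S' : {set T}, (S \subset S') && strongly_connected S' ==> (S' == S)]].

Definition leaf_scc (S : {set T}) : bool :=
  [&& scc S, (1 < #|S|)%N & [forall x in S, forall y, A x y ==> (y \in S)]].

End Graph.

(* minimum of the weights q over a (nonempty) vertex set S; 0 on the empty set *)
Definition setmin (T : finType) (R : realDomainType) (q : T -> R) (S : {set T}) : R :=
  if [pick x in S] is Some x then \big[Order.min/q x]_(a in S) q a else 0.

Definition selected (T : finType) (A : rel T) (sel : {set T} -> T) : {set T} :=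
  [set sel S | S in [set S : {set T} | leaf_scc A S]].

Definition pruned (T : finType) (A : rel T) (sel : {set T} -> T) : rel T :=
  [rel x y | A x y && (x \notin selected A sel)].

From mathcomp Require Import all_boot all_order all_algebra.
Import Order.TTheory GRing.Theory Num.Theory.
Local Open Scope ring_scope.

Set Implicit Arguments. Unset Strict Implicit.

(* In the pruned graph a vertex is a leaf exactly when it is a leaf of the
   original graph or a selected vertex.  Every vertex still reaches a pruned
   leaf, so the predecessors of pruned leaves are precisely the non-leaves of
   the pruned graph.  Distinct leaf SCCs are disjoint, so the selected vertices
   are distinct; they are not leaves and carry the minimal weight of their
   SCC, which turns the sum over the remaining vertices into the formula. *)

Section StronglyConnected.
Variables (T : finType) (A : rel T).

Lemma strongly_connectedP (S : {set T}) :
  reflect {in S &, forall x y, connect (induced A S) x y} (strongly_connected A S).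
Proof.
apply: (iffP forall_inP) => [sc x y xS yS | sc x xS].
  by move/forall_inP: (sc x xS); apply.
by apply/forall_inP => y yS; apply: sc.
Qed.

Lemma connect_induced (S : {set T}) x y : connect (induced A S) x y -> connect A x y.
Proof. by apply: connect_sub => u v /andP[Auv _]; apply: connect1. Qed.

Lemma connect_induced_sub (S S' : {set T}) x y : S \subset S' ->
  connect (induced A S) x y -> connect (induced A S') x y.
Proof.
move=> sSS'; apply: connect_sub => u v /and3P[Auv uS vS]; apply: connect1.
by rewrite /induced /= Auv !(subsetP sSS').
Qed.

Lemma connect_induced_closed (S : {set T}) x y :
  (forall u v, u \in S -> A u v -> v \in S) -> x \in S ->
  connect A x y -> connect (induced A S) x y.
Proof.
move=> clS + /connectP[p]; elim: p x => [|z p IHp] x xS /=; first by move=> _ ->.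
case/andP=> Axz pz y_last; have zS := clS _ _ xS Axz.
by apply: connect_trans (connect1 _) (IHp z zS pz y_last); rewrite /induced /= Axz xS zS.
Qed.

Lemma strongly_connectedU (S1 S2 : {set T}) x :
  strongly_connected A S1 -> strongly_connected A S2 -> x \in S1 -> x \in S2 ->
  strongly_connected A (S1 :|: S2).
Proof.
move=> /strongly_connectedP sc1 /strongly_connectedP sc2 xS1 xS2.
have c1 u v : u \in S1 -> v \in S1 -> connect (induced A (S1 :|: S2)) u v.
  by move=> uS vS; apply: connect_induced_sub (subsetUl _ _) (sc1 u v uS vS).
have c2 u v : u \in S2 -> v \in S2 -> connect (induced A (S1 :|: S2)) u v.
  by move=> uS vS; apply: connect_induced_sub (subsetUr _ _) (sc2 u v uS vS).
apply/strongly_connectedP => u v; rewrite !inE => /orP[uS|uS] /orP[vS|vS].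
- exact: c1.
- exact: connect_trans (c1 _ _ uS xS1) (c2 _ _ xS2 vS).
- exact: connect_trans (c2 _ _ uS xS2) (c1 _ _ xS1 vS).
- exact: c2.
Qed.

Lemma scc_inj (S1 S2 : {set T}) x :
  scc A S1 -> scc A S2 -> x \in S1 -> x \in S2 -> S1 = S2.
Proof.
move=> /and3P[_ sc1 /forallP max1] /and3P[_ sc2 /forallP max2] xS1 xS2.
have scU := strongly_connectedU sc1 sc2 xS1 xS2.
have /eqP <- : S1 :|: S2 == S1 by apply: (implyP (max1 _)); rewrite subsetUl.
by apply/eqP; apply: (implyP (max2 _)); rewrite subsetUr.
Qed.

Lemma leaf_scc_not_leaf (S : {set T}) x : leaf_scc A S -> x \in S -> ~~ leaf A x.
Proof.
case/and3P=> /and3P[_ /strongly_connectedP sc _] S_gt1 _ xS.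
have [y /andP[yx yS]] : exists y, (y != x) && (y \in S).
  by apply/card_gt0P; move: S_gt1; rewrite (cardD1 x) xS.
have /connectP[[|z p] /=] := sc x y xS yS; first by move=> _ y_x; rewrite y_x eqxx in yx.
by case/andP=> /andP[Axz _] _ _; apply/forallPn; exists z; rewrite negbK.
Qed.

Definition reach (x : T) : {set T} := [set y | connect A x y].

Lemma leaf_scc_reach t : (forall i, ~~ A i i) -> ~~ leaf A t ->
  (forall z, connect A t z -> connect A z t) -> leaf_scc A (reach t).
Proof.
move=> noloop /forallPn[y]; rewrite negbK => Aty back.
have reach_closed u v : u \in reach t -> A u v -> v \in reach t.
  by rewrite !inE => tu Auv; apply: connect_trans tu (connect1 Auv).
have t_reach : t \in reach t by rewrite inE connect0.
apply/and3P; split; [apply/and3P; split | |].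
- by apply/set0Pn; exists t.
- apply/strongly_connectedP => u v; rewrite !inE => tu tv.
  by apply: connect_induced_closed; rewrite ?inE //; apply: connect_trans (back u tu) tv.
- apply/forallP => S'; apply/implyP => /andP[sub /strongly_connectedP sc'].
  rewrite eqEsubset sub andbT; apply/subsetP => w wS'; rewrite inE.
  exact: connect_induced (sc' t w (subsetP sub t t_reach) wS').
- have yt : y != t by apply: contraTneq Aty => ->; apply: noloop.
  by rewrite (cardD1 t) t_reach ltnS; apply/card_gt0P; exists y; rewrite !inE yt connect1.
- by apply/forall_inP => u uS; apply/forallP => v; apply/implyP; apply: reach_closed.
Qed.

(* A vertex t reachable from x with the fewest reachable vertices can only
   reach vertices that reach t back. *)
Lemma connect_leaf_or_leaf_scc x : (forall i, ~~ A i i) ->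
  exists2 t, connect A x t & leaf A t \/ exists2 S, leaf_scc A S & t \in S.
Proof.
move=> noloop.
case: (@arg_minnP T x (connect A x) (fun t => #|reach t|) (connect0 _ _)) => t xt tmin.
have back z : connect A t z -> connect A z t.
  move=> tz; have sub : reach z \subset reach t.
    by apply/subsetP => w; rewrite !inE; apply: connect_trans.
  have eq_reach : reach z = reach t.
    by apply/eqP; rewrite eqEcard sub tmin //; apply: connect_trans xt tz.
  have : t \in reach t by rewrite inE connect0.
  by rewrite -eq_reach inE.
exists t => //; have [tleaf|tnleaf] := boolP (leaf A t); [by left | right].
by exists (reach t); [apply: leaf_scc_reach | rewrite inE connect0].
Qed.

End StronglyConnected.

Section Paths.
Variables (T : finType) (e : rel T).

Lemma connect_stop (e' : rel T) (P : pred T) x y :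
  (forall u v, e' u v -> ~~ P u -> e u v) -> connect e' x y -> P y ->
  exists2 l, P l & connect e x l.
Proof.
move=> sub /connectP[p + ->]; elim: p x => [|z p IHp] x /=; first by exists x.
case/andP=> e'xz pz Pl; have [Px|nPx] := boolP (P x); first by exists x.
have [l Pl' zl] := IHp z pz Pl.
by exists l => //; apply: connect_trans (connect1 (sub _ _ e'xz nPx)) zl.
Qed.

Lemma exists_leaf_predecessor i :
  (forall x, exists2 l, leaf e l & connect e x l) ->
  [exists l, leaf e l && predecessor e i l] = ~~ leaf e i.
Proof.
move=> to_leaf; apply/existsP/forallPn => [[l /andP[_ /existsP[k /andP[eik _]]]] | [k]].
  by exists k; rewrite negbK.
rewrite negbK => eik; have [l leaf_l kl] := to_leaf k.
by exists l; rewrite leaf_l; apply/existsP; exists k; rewrite eik.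
Qed.

End Paths.

Lemma setmin_eq (T : finType) (R : realDomainType) (q : T -> R) (S : {set T}) x :
  x \in S -> (forall a, a \in S -> q x <= q a) -> setmin q S = q x.
Proof.
move=> xS xmin; rewrite /setmin; case: pickP => [x0 x0S|]; last by move/(_ x); rewrite xS.
apply/eqP; rewrite eq_le bigmin_le_cond //=.
by apply: le_bigmin => [|a aS]; apply: xmin.
Qed.

Section Pruning.
Variables (T : finType) (A : rel T) (sel : {set T} -> T).
Hypothesis sel_in : forall S : {set T}, leaf_scc A S -> sel S \in S.

Lemma leaf_pruned i : leaf (pruned A sel) i = leaf A i || (i \in selected A sel).
Proof.
have [iS|iS] := boolP (i \in selected A sel); rewrite ?orbT ?orbF.
  by apply/forallP => j; rewrite /pruned /= iS andbF.
by apply: eq_forallb => j; rewrite /pruned /= iS andbT.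
Qed.

Lemma selected_not_leaf s : s \in selected A sel -> ~~ leaf A s.
Proof. by case/imsetP=> S; rewrite inE => lS ->; apply: leaf_scc_not_leaf lS (sel_in lS). Qed.

Lemma big_selected (R : Type) (idx : R) (op : Monoid.com_law idx) (F : T -> R) :
  \big[op/idx]_(S : {set T} | leaf_scc A S) F (sel S)
  = \big[op/idx]_(i in selected A sel) F i.
Proof.
rewrite big_imset /=; first by apply: eq_bigl => S; rewrite inE.
move=> S1 S2; rewrite !inE => lS1 lS2 eq_sel.
have [/and3P[scc1 _ _] /and3P[scc2 _ _]] := (lS1, lS2).
by apply: scc_inj scc1 scc2 (sel_in lS1) _; rewrite eq_sel sel_in.
Qed.

Hypothesis noloop : forall i : T, ~~ A i i.

(* Every vertex reaches, in the original graph, a leaf or a selected vertex;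
   the first such vertex on that path is reached without using a removed arc. *)
Lemma connect_pruned_leaf x : exists2 l, leaf (pruned A sel) l & connect (pruned A sel) x l.
Proof.
have unpruned u v : A u v -> ~~ leaf (pruned A sel) u -> pruned A sel u v.
  by rewrite leaf_pruned => Auv /norP[_ uS]; rewrite /pruned /= Auv.
have [t xt [tleaf | [S lS tS]]] := connect_leaf_or_leaf_scc x noloop.
  by apply: connect_stop unpruned xt _; rewrite leaf_pruned tleaf.
have t_sel : connect A t (sel S).
  have [/and3P[_ /strongly_connectedP sc _] _ _] := and3P lS.
  exact: connect_induced (sc _ _ tS (sel_in lS)).
apply: connect_stop unpruned (connect_trans xt t_sel) _.
by rewrite leaf_pruned imset_f ?orbT // inE.
Qed.

End Pruning.

Theorem lemma7 (T : finType) (R : realDomainType) (A : rel T) (q : T -> R)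
    (sel : {set T} -> T)
    (noloop : forall i : T, ~~ A i i)
    (hsel : forall S : {set T}, leaf_scc A S ->
        sel S \in S /\ (forall a, a \in S -> q (sel S) <= q a)) :
  subrel (pruned A sel) A /\
  \sum_(i | [exists l, leaf (pruned A sel) l && predecessor (pruned A sel) i l]) q i
  = \sum_(k : T) q k - \sum_(i | leaf A i) q i
      - \sum_(S : {set T} | leaf_scc A S) setmin q S.
Proof.
split; first by move=> x y /andP[].
have sel_in S : leaf_scc A S -> sel S \in S by case/hsel.
set Sel := selected A sel.
have -> : \sum_(S | leaf_scc A S) setmin q S = \sum_(i in Sel) q i.
  rewrite -(big_selected sel_in); apply: eq_bigr => S /hsel[selS selmin].
  exact: setmin_eq.
rewrite (eq_bigl (fun i => ~~ (leaf A i || (i \in Sel)))) => [|i]; last first.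
  by rewrite exists_leaf_predecessor ?leaf_pruned // => x; apply: connect_pruned_leaf.
have split_all : \sum_k q k = \sum_(i | ~~ (leaf A i || (i \in Sel))) q i
    + \sum_(i in Sel) q i + \sum_(i | leaf A i) q i.
  rewrite (bigID (fun i => leaf A i || (i \in Sel))) addrC /=.
  rewrite (bigID (leaf A)) /= addrA addrAC.
  congr (_ + _ + _); apply: eq_bigl => i; first by case: (leaf A i); rewrite ?andbF.
  have [iS|] := boolP (i \in Sel); last by case: (leaf A i).
  by rewrite orbT (selected_not_leaf sel_in iS).
by rewrite split_all !addrK.
Qed.
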